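(* Let $X$ be a regular topological space. Then $X$ is $Scat(X)$-selectively pseudocompact if and only if $X$ is $Disc(X)$-selectively pseudocompact, where $Scat(X)$ is the family of scattered subsets of $X$ and $Disc(X)$ is the family of discrete subsets of $X$.
   Context: For a topological space $X$ and $\mathcal A\subseteq\mathcal P(X)$, $X$ is called $\mathcal A$-selectively pseudocompact if for every sequence $\langle U_n:n\in\omega\rangle$ of pairwise disjoint non-empty open subsets of $X$ one can choose sets $A_n\in\mathcal A$ with $A_n\subseteq U_n$ such that the family $\{A_n:n\in\omega\}$ has an accumulation point, i.e. there is a point $x\in X$ every neighbourhood of which meets $A_n$ for infinitely many $n$. A subset $Y\subseteq X$ is discrete if it is discrete in the subspace topology, and scattered if every non-empty subset of $Y$ has a point isolated in it. *)

From HB Require Import structures.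
From mathcomp Require Import all_boot all_order all_algebra.
From mathcomp Require Import all_classical all_reals all_analysis.
Set Implicit Arguments. Unset Strict Implicit. Unset Printing Implicit Defensive.
Local Open Scope classical_set_scope.

Definition isolated_in {T : topologicalType} (B : set T) (y : T) : Prop :=
  B y /\ exists U : set T, open U /\ U y /\ U `&` B = [set y].

Definition discrete_subset {T : topologicalType} (Y : set T) : Prop :=
  forall y, Y y -> isolated_in Y y.

Definition scattered_subset {T : topologicalType} (Y : set T) : Prop :=
  forall B : set T, B `<=` Y -> B !=set0 -> exists y, isolated_in B y.

Definition Disc (T : topologicalType) : set (set T) := [set Y | discrete_subset Y].
Definition Scat (T : topologicalType) : set (set T) := [set Y | scattered_subset Y].

Definition family_accumulation_point {T : topologicalType} (A : nat -> set T) (x : T) : Prop :=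
  forall N : set T, nbhs x N -> infinite_set [set n : nat | N `&` A n !=set0].

Definition selectively_pseudocompact_wrt {T : topologicalType} (F : set (set T)) : Prop :=
  forall U : nat -> set T,
    (forall n, open (U n)) -> (forall n, U n !=set0) ->
    (forall n m, n <> m -> U n `&` U m = set0) ->
    exists A : nat -> set T,
      (forall n, F (A n) /\ A n `<=` U n) /\
      exists x : T, family_accumulation_point A x.

From HB Require Import structures.
From mathcomp Require Import all_boot all_order all_algebra.
From mathcomp Require Import all_classical all_reals all_analysis.
Local Open Scope classical_set_scope.

(* Discrete sets are scattered, which gives one direction.  Conversely, the
   isolated points of a scattered set A form a discrete set that is dense in A
   (every open set meeting A meets A in a subset with an isolated point), so
   replacing each scattered A n by its isolated points keeps every
   accumulation point of the family. *)

Section IsolatedPoints.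
Variable X : topologicalType.

Definition isolated_points (A : set X) : set X := [set y | isolated_in A y].

Lemma isolated_points_sub (A : set X) : isolated_points A `<=` A.
Proof. by move=> y []. Qed.

Lemma isolated_in_subset (A B : set X) (y : X) :
  B `<=` A -> B y -> isolated_in A y -> isolated_in B y.
Proof.
move=> BA By [_ [U [oU [Uy UA]]]]; split => //; exists U; split => //; split => //.
apply/seteqP; split => [z [Uz Bz]|z ->//].
by rewrite -UA; split => //; exact: BA.
Qed.

Lemma discrete_isolated_points (A : set X) : discrete_subset (isolated_points A).
Proof.
move=> y [Ay [U [oU [Uy UA]]]]; split; first by split => //; exists U.
exists U; split => //; split => //.
apply/seteqP; split => [z [Uz [Az _]]|z ->]; first by rewrite -UA.
by split => //; split => //; exists U.
Qed.

Lemma discrete_scattered (Y : set X) : discrete_subset Y -> scattered_subset Y.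
Proof.
by move=> dY B BY [y By]; exists y; apply: isolated_in_subset BY By (dY y (BY y By)).
Qed.

Lemma scattered_isolated_points_meet (A V : set X) :
  scattered_subset A -> open V -> V `&` A !=set0 -> V `&` isolated_points A !=set0.
Proof.
move=> sA oV VA.
have [y [[Vy Ay] [W [oW [Wy WVA]]]]] := sA (V `&` A) (@subIsetr _ V A) VA.
exists y; split => //; split => //; exists (W `&` V); split; first exact: openI.
by split => //; rewrite -setIA.
Qed.

Lemma family_accumulation_point_meet (A B : nat -> set X) (x : X) :
  (forall n V, open V -> V `&` A n !=set0 -> V `&` B n !=set0) ->
  family_accumulation_point A x -> family_accumulation_point B x.
Proof.
move=> AB xA N; rewrite nbhsE => -[V [oV Vx] VN].
have := xA V (open_nbhs_nbhs (conj oV Vx)); apply: contra_not.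
apply: sub_finite_set => n /= /(AB n V oV) [y [Vy By]].
by exists y; split => //; exact: VN.
Qed.

Lemma selectively_pseudocompact_wrt_sub (F G : set (set X)) :
  F `<=` G -> selectively_pseudocompact_wrt F -> selectively_pseudocompact_wrt G.
Proof.
move=> FG spF U oU U0 dU; have [A [FA xA]] := spF U oU U0 dU.
by exists A; split => // n; have [/FG GA AU] := FA n.
Qed.

Lemma selectively_pseudocompact_Scat_Disc :
  selectively_pseudocompact_wrt (@Scat X) -> selectively_pseudocompact_wrt (@Disc X).
Proof.
move=> spS U oU U0 dU; have [A [SA [x xA]]] := spS U oU U0 dU.
exists (isolated_points \o A); split.
  move=> n; split; first exact: discrete_isolated_points.
  by apply: subset_trans (proj2 (SA n)); exact: isolated_points_sub.
exists x; apply: family_accumulation_point_meet xA => n V oV.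
exact: scattered_isolated_points_meet (proj1 (SA n)) oV.
Qed.

End IsolatedPoints.

Theorem proposition1p4 (X : topologicalType) :
  regular_space X ->
  (selectively_pseudocompact_wrt (@Scat X) <-> selectively_pseudocompact_wrt (@Disc X)).
Proof.
move=> _; split; first exact: selectively_pseudocompact_Scat_Disc.
by apply: selectively_pseudocompact_wrt_sub => Y; exact: discrete_scattered.
Qed.
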